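(* Let $A_1,\ldots,A_n$ be events in a probability space, let $X$ be the number of these events that occur, and for $1\le j\le n$ let $S_j=\sum_{1\le i_1<\cdots<i_j\le n}P(A_{i_1}\cdots A_{i_j})$. Let $r,k$ be integers with $1\le r\le k<n$. For $1\le i\le r$ and indices $1\le r_1<\cdots<r_{k+1-i}\le n$, let $$T(r_1,\ldots,r_{k+1-i})=\{(t_1,\ldots,t_i): r_{k+1-i}<t_1<\cdots<t_i\le n\},$$ and let $$M_i=\sum_{1\le r_1<\cdots<r_{k+1-i}\le n}\ \max_{(t_1,\ldots,t_i)\in T(r_1,\ldots,r_{k+1-i})}P(A_{r_1}\cdots A_{r_{k+1-i}}A_{t_1}\cdots A_{t_i}).$$ If $r+k$ is odd, then $$P(X\ge r)\ge\sum_{j=r}^{k}(-1)^{r+j}\binom{j-1}{r-1}S_j+\sum_{i=1}^{r}\binom{k-i}{r-i}M_i,$$ and if $r+k$ is even, then $$P(X\ge r)\le\sum_{j=r}^{k}(-1)^{r+j}\binom{j-1}{r-1}S_j-\sum_{i=1}^{r}\binom{k-i}{r-i}M_i.$$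
   Context: Binomial convention: for integers $s,t$, $\binom{t}{s}=0$ if $\min(s,t)<0$ or $s>t$; otherwise $\binom{t}{s}=\frac{t!}{s!(t-s)!}$. $A_{i_1}\cdots A_{i_j}$ denotes the intersection of the events. A maximum over an empty set $T(\cdot)$ is taken to be $0$. *)

From HB Require Import structures.
From mathcomp Require Import all_boot all_order all_algebra.
From mathcomp Require Import all_classical all_reals all_analysis.
Set Implicit Arguments. Unset Strict Implicit. Unset Printing Implicit Defensive.
Import Order.TTheory GRing.Theory Num.Theory.
Local Open Scope classical_set_scope.
Local Open Scope ring_scope.

Definition pr d (T : measurableType d) (R : realType) (P : probability T R)
  (E : set T) : R := fine (P E).

(* intersection of the events A_i, i in I (for I = set0 this is setT) *)
Definition inter (T : Type) (n : nat) (A : 'I_n -> set T) (I : {set 'I_n}) : set T :=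
  [set w | forall i, i \in I -> A i w].

Definition count_occ (T : Type) (n : nat) (A : 'I_n -> set T) (w : T) : nat :=
  #|[set i : 'I_n | `[< A i w >]]|.

Definition Ssum d (T : measurableType d) (R : realType) (P : probability T R)
  (n : nat) (A : 'I_n -> set T) (j : nat) : R :=
  \sum_(I : {set 'I_n} | #|I| == j) pr P (inter A I).

(* M_i = sum over (k+1-i)-subsets Rs of max over i-subsets Ts lying entirely
   above max Rs of P(A_Rs A_Ts); empty max = 0 *)
Definition Msum d (T : measurableType d) (R : realType) (P : probability T R)
  (n : nat) (A : 'I_n -> set T) (k i : nat) : R :=
  \sum_(Rs : {set 'I_n} | #|Rs| == (k + 1 - i)%N)
    \big[Num.max/0]_(Ts : {set 'I_n} |
        (#|Ts| == i) && [forall t in Ts, forall s in Rs, (s < t)%N])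
      pr P (inter A (Rs :|: Ts)).

Definition bonf_sum d (T : measurableType d) (R : realType) (P : probability T R)
  (n : nat) (A : 'I_n -> set T) (r k : nat) : R :=
  \sum_(r <= j < k.+1) (-1) ^+ (r + j) * ('C(j.-1, r.-1))%:R * Ssum P A j.

Definition M_corr d (T : measurableType d) (R : realType) (P : probability T R)
  (n : nat) (A : 'I_n -> set T) (r k : nat) : R :=
  \sum_(1 <= i < r.+1) ('C(k - i, r - i))%:R * Msum P A k i.

From HB Require Import structures.
From mathcomp Require Import all_boot all_order all_algebra.
From mathcomp Require Import all_classical all_reals all_analysis.
From mathcomp Require Import zify ring.
Set Implicit Arguments. Unset Strict Implicit. Unset Printing Implicit Defensive.
Import Order.TTheory GRing.Theory Num.Theory.

(* Split the sample space into the atoms B_E, E a set of indices, on which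
   exactly the events A_i, i in E, occur.  P(X >= r), every S_j and hence the
   Bonferroni sum are combinations of the P(B_E) whose coefficients depend only
   on m = |E|, and the Bonferroni coefficient differs from [r <= m] by
   (-1)^(r+k+1) U(r,k,m), where U(r,k,m) = sum_i C(k-i,r-i) C(m-i,k+1-i) >= 0.
   Finally M_i <= sum_E P(B_E) C(|E|-i, k+1-i): each P(A_Rs A_Ts) in the max is
   the mass of the atoms E containing Rs and Ts, and for those E every element
   of Rs has at least i larger elements in E, which leaves at most |E|-i
   candidates for the elements of Rs. *)

Section LowerPart.
Variable n : nat.
Implicit Types (E Rs Ts : {set 'I_n}) (x : 'I_n).

Definition above E x := [set y in E | x < y].

Definition lower_part i E := [set x in E | i <= #|above E x|].

Lemma ltn_card_above E x y :
  x \in E -> y \in E -> x < y -> #|above E y| < #|above E x|.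
Proof.
move=> xE yE xy; apply: proper_card; rewrite properE; apply/andP; split.
  by apply/fintype.subsetP => z; rewrite !inE => /andP[-> /(ltn_trans xy)].
by apply/subsetPn; exists y; rewrite !inE ?yE ?xy ?ltnn ?andbF.
Qed.

Lemma card_above_lt_card E x : x \in E -> #|above E x| < #|E|.
Proof.
move=> xE; apply: proper_card; rewrite properE; apply/andP; split.
  by apply/fintype.subsetP => y; rewrite inE => /andP[].
by apply/subsetPn; exists x; rewrite ?inE ?ltnn ?andbF.
Qed.

Lemma card_lower_part i E : #|lower_part i E| <= #|E| - i.
Proof.
pose f x := #|above E x|.
have f_inj : {in lower_part i E &, injective f}.
  move=> x y; rewrite !inE => /andP[xE _] /andP[yE _] fxy.
  case: (ltngtP x y) => [xy|yx|/val_inj//].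
  - by have := ltn_card_above xE yE xy; rewrite -/(f x) -/(f y) fxy ltnn.
  - by have := ltn_card_above yE xE yx; rewrite -/(f x) -/(f y) fxy ltnn.
rewrite cardE -(size_map f) -[#|E| - i](size_iota i); apply: uniq_leq_size.
  by rewrite map_inj_in_uniq ?enum_uniq // => x y; rewrite !mem_enum; apply: f_inj.
move=> v /mapP[x]; rewrite mem_enum inE => /andP[xE ix] ->.
by rewrite mem_iota; have := card_above_lt_card xE; rewrite /f in ix *; lia.
Qed.

Lemma sub_lower_part i E Rs Ts :
  Rs \subset E -> Ts \subset E -> #|Ts| = i ->
  [forall t in Ts, forall s in Rs, s < t] -> Rs \subset lower_part i E.
Proof.
move=> RsE TsE <- /forallP RsTs; apply/fintype.subsetP => s sRs.
rewrite inE (fintype.subsetP RsE _ sRs) /=; apply: subset_leq_card.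
apply/fintype.subsetP => t tTs; rewrite inE (fintype.subsetP TsE _ tTs) /=.
by have /implyP/(_ tTs)/forallP/(_ s)/implyP := RsTs t; apply.
Qed.

End LowerPart.

Lemma bin_diag_sum r m : 0 < r ->
  'C(m, r) = (r <= m) + \sum_(1 <= i < r.+1) 'C(m - i, r + 1 - i).
Proof.
elim: r m => // -[_ m _ | r IH [|m] _].
- by rewrite big_nat1 bin1 subn1 bin1; case: m.
- rewrite bin0n big1_seq // => i; rewrite mem_index_iota sub0n bin0n.
  by case: eqP => //; lia.
rewrite big_nat_recl // binS (IH m) // subSS subn1 ltnS addnCA subn0 addn1.
congr (_ + (_ + _)); first by rewrite addn1.
by apply: eq_bigr => i _; rewrite subSS addn1 subSS.
Qed.

Definition bonf_rem r k m : nat :=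
  \sum_(1 <= i < r.+1) 'C(k - i, r - i) * 'C(m - i, k + 1 - i).

Lemma bonf_remS r k m : 0 < k ->
  bonf_rem r.+1 k m = 'C(k - 1, r) * 'C(m - 1, k) + bonf_rem r (k - 1) (m - 1).
Proof.
move=> k_gt0; rewrite /bonf_rem big_nat_recl // subSS subn0 addnK.
congr (_ + _); apply: eq_bigr => i _; congr ('C(_, _) * 'C(_, _)); lia.
Qed.

Lemma binB1S m k : 0 < k -> 'C(m - 1, k) + 'C(m - 1, k.+1) = 'C(m, k.+1).
Proof.
by case: m => [|m] k_gt0; rewrite ?bin0n ?subn1 ?[in RHS]binS 1?addnC //; case: k k_gt0.
Qed.

Lemma bonf_rem_addS r k m : 0 < r -> r <= k ->
  bonf_rem r k m + bonf_rem r k.+1 m = 'C(k, r.-1) * 'C(m, k.+1).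
Proof.
elim: r k m => // r IH [//|k] m _ rk.
rewrite !bonf_remS // !subSS !subn0.
case: r IH rk => [|r] IH rk.
  by rewrite /bonf_rem !big_geq // !addn0 !bin0 !mul1n binB1S.
rewrite addnACA IH // -(binB1S m (ltn0Sn k)) [in RHS]binS /=.
by rewrite !mulnDl !mulnDr; ring.
Qed.

Local Open Scope ring_scope.

Definition bonf_weight (R : pzRingType) r k m : R :=
  \sum_(r <= j < k.+1) (-1) ^+ (r + j) * ('C(j.-1, r.-1))%:R * ('C(m, j))%:R.

Lemma bonf_weightS (R : pzRingType) r k m : (r <= k.+1)%N ->
  bonf_weight R r k.+1 m =
    bonf_weight R r k m + (-1) ^+ (r + k.+1) * ('C(k, r.-1))%:R * ('C(m, k.+1))%:R.
Proof. by move=> rk; rewrite /bonf_weight big_nat_recr. Qed.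

Lemma bonf_weight_rem (R : comPzRingType) r k m : (0 < r)%N -> (r <= k)%N ->
  (r <= m)%N%:R = bonf_weight R r k m + (-1) ^+ (r + k + 1) * (bonf_rem r k m)%:R :> R.
Proof.
move=> r_gt0; elim: k => [|k IH]; first by rewrite leqNgt r_gt0.
rewrite leq_eqVlt => /orP[/eqP <- | rk].
  have sign_rr : (-1) ^+ (r + r) = 1 :> R by rewrite -signr_odd addnn odd_double.
  rewrite /bonf_weight big_nat1 sign_rr exprD sign_rr expr1 binn !mul1r.
  have -> : bonf_rem r r m = \sum_(1 <= i < r.+1) 'C(m - i, r + 1 - i).
    by apply: eq_bigr => i _; rewrite binn mul1n.
  by rewrite (bin_diag_sum m r_gt0) natrD mulN1r addrK.
have rem_next : (bonf_rem r k.+1 m)%:R =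
    ('C(k, r.-1) * 'C(m, k.+1))%:R - (bonf_rem r k m)%:R :> R.
  by rewrite -(bonf_rem_addS m r_gt0 rk) natrD addrC addKr.
rewrite (IH rk) bonf_weightS 1?ltnW // rem_next natrM !addn1 !addnS !exprS; ring.
Qed.

Lemma sum_if_const (R : pzSemiRingType) (X : finType) (a b : pred X) (c : R) :
  \sum_(x | a x) (if b x then c else 0) = #|[set x | b x & a x]|%:R * c.
Proof.
rewrite -big_mkcondr (eq_bigl (fun x => x \in [set x | b x & a x])).
  by rewrite sumr_const mulr_natl.
by move=> x; rewrite inE andbC.
Qed.

Section Atoms.
Local Open Scope classical_set_scope.
Context d (T : measurableType d) (R : realType) (P : probability T R) (n : nat).
Context (A : 'I_n -> set T).
Hypothesis mA : forall i, measurable (A i).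

Definition occ (w : T) : {set 'I_n} := [set i | `[< A i w >]].

Definition atom (E : {set 'I_n}) : set T := [set w | occ w = E].

Lemma measurable_atom E : measurable (atom E).
Proof.
have -> : atom E = \bigcap_(i in [set: 'I_n]) (if i \in E then A i else ~` A i).
  apply/seteqP; split => [w <- i _ | w wE]; first by rewrite inE; case: asboolP.
  apply/setP => i; rewrite inE; have := wE i I.
  by case: (i \in E); case: asboolP.
apply: fin_bigcap_measurable => [|i _]; first exact: finite_finset.
by case: (i \in E); [exact: mA | exact: measurableC].
Qed.

Lemma pr_occ (Q : pred {set 'I_n}) :
  pr P [set w | Q (occ w)] = \sum_(E : {set 'I_n} | Q E) pr P (atom E).
Proof.
have -> : [set w | Q (occ w)] = \bigcup_(E in [set` Q]) atom E.
  apply/seteqP; split => [w Qw | w [E QE]]; first by exists (occ w).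
  by rewrite /atom /= => ->.
rewrite /pr (measure_fin_bigcup P); first last.
- by move=> E _; exact: measurable_atom.
- by move=> E F _ _ [w [/= <- <-]].
- exact: finite_finset.
rewrite -(bigfs _ (index_enum_uniq _)) ?sum_fine // => [E _|E _].
  exact: fin_num_measure (measurable_atom E).
by rewrite mem_index_enum.
Qed.

Lemma pr_ge0 (X : set T) : 0 <= pr P X.
Proof. exact/fine_ge0/measure_ge0. Qed.

Lemma pr_inter (I : {set 'I_n}) :
  pr P (inter A I) = \sum_(E : {set 'I_n} | I \subset E) pr P (atom E).
Proof.
rewrite -pr_occ; congr (pr P _); apply/seteqP; split => w /=.
  by move=> AIw; apply/fintype.subsetP => i /AIw Aiw; rewrite inE; exact/asboolP.
by move=> /fintype.subsetP Iw i /Iw; rewrite inE => /asboolP.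
Qed.

Lemma count_occE w : count_occ A w = #|occ w|.
Proof.
by apply: eq_card => i; rewrite [in RHS]inE; apply/idP/idP => [|h]; rewrite in_setE.
Qed.

Lemma pr_count_occ_ge r :
  pr P [set w | (r <= count_occ A w)%N] =
    \sum_(E : {set 'I_n}) pr P (atom E) * (r <= #|E|)%N%:R.
Proof.
under eq_set do rewrite count_occE.
rewrite (pr_occ (fun E : {set 'I_n} => r <= #|E|)%N) big_mkcond; apply: eq_bigr => E _.
by case: (r <= #|E|)%N; rewrite ?mulr1 ?mulr0.
Qed.

Lemma SsumE j : Ssum P A j = \sum_(E : {set 'I_n}) pr P (atom E) * ('C(#|E|, j))%:R.
Proof.
rewrite /Ssum; under eq_bigr do rewrite pr_inter big_mkcond.
by rewrite exchange_big; apply: eq_bigr => E _; rewrite sum_if_const cards_draws mulrC.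
Qed.

Lemma bonf_sumE r k :
  bonf_sum P A r k = \sum_(E : {set 'I_n}) pr P (atom E) * bonf_weight R r k #|E|.
Proof.
rewrite /bonf_sum; under eq_bigr do rewrite SsumE mulr_sumr.
rewrite exchange_big; apply: eq_bigr => E _.
by rewrite mulr_sumr; apply: eq_bigr => j _; rewrite mulrCA mulrA.
Qed.

Lemma max_pr_inter_le i (Rs : {set 'I_n}) :
  \big[Num.max/0]_(Ts : {set 'I_n} |
      (#|Ts| == i) && [forall t in Ts, forall s in Rs, (s < t)%N])
    pr P (inter A (Rs :|: Ts))
  <= \sum_(E : {set 'I_n} | Rs \subset lower_part i E) pr P (atom E).
Proof.
apply: bigmax_le => [|Ts /andP[/eqP TsE RsTs]].
  by apply: sumr_ge0 => E _; exact: pr_ge0.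
rewrite pr_inter big_mkcond [leRHS]big_mkcond; apply: ler_sum => E _.
case: ifP => [|_]; last by case: ifP => // _; exact: pr_ge0.
rewrite finset.subUset => /andP[RsE TsE'].
by rewrite (sub_lower_part RsE TsE' TsE RsTs).
Qed.

Lemma Msum_le k i :
  Msum P A k i <= \sum_(E : {set 'I_n}) pr P (atom E) * ('C(#|E| - i, k + 1 - i))%:R.
Proof.
apply: le_trans (ler_sum _ (fun Rs _ => max_pr_inter_le i Rs)) _.
under eq_bigr do rewrite big_mkcond.
rewrite exchange_big; apply: ler_sum => E _.
rewrite sum_if_const cards_draws mulrC ler_wpM2l ?pr_ge0 // ler_nat.
exact/leq_bin2l/card_lower_part.
Qed.

Lemma M_corr_le r k :
  M_corr P A r k <= \sum_(E : {set 'I_n}) pr P (atom E) * (bonf_rem r k #|E|)%:R.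
Proof.
apply: le_trans (ler_sum _ (fun i _ => ler_wpM2l (ler0n _ _) (Msum_le k i))) _.
under eq_bigr do rewrite mulr_sumr.
rewrite exchange_big le_eqVlt; apply/orP; left; apply/eqP; apply: eq_bigr => E _.
rewrite /bonf_rem natr_sum mulr_sumr; apply: eq_bigr => i _.
by rewrite natrM mulrCA.
Qed.

End Atoms.

Theorem theorem4 (d : measure_display) (T : measurableType d) (R : realType)
  (P : probability T R) (n : nat) (A : 'I_n -> set T)
  (mA : forall i, measurable (A i)) (r k : nat)
  (hr : (1 <= r)%N) (hrk : (r <= k)%N) (hkn : (k < n)%N) :
  (odd (r + k) ->
    bonf_sum P A r k + M_corr P A r k <= pr P [set w | (r <= count_occ A w)%N]) /\
  (~~ odd (r + k) ->
    pr P [set w | (r <= count_occ A w)%N] <= bonf_sum P A r k - M_corr P A r k).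
Proof.
(* The bound holds for every k >= r. *)
set U := \sum_(E : {set 'I_n}) pr P (atom A E) * (bonf_rem r k #|E|)%:R.
have M_corr_leU : M_corr P A r k <= U := M_corr_le P mA r k.
have pr_count_ge : pr P [set w | (r <= count_occ A w)%N] =
    bonf_sum P A r k + (-1) ^+ (r + k + 1) * U.
  rewrite pr_count_occ_ge // bonf_sumE // mulr_sumr -big_split; apply: eq_bigr => E _.
  by rewrite (bonf_weight_rem R #|E| hr hrk) mulrDr mulrCA.
rewrite pr_count_ge -signr_odd addn1 /= oddD; split => [-> | /negbTE ->].
  by rewrite expr0 mul1r lerD2l.
by rewrite expr1 mulN1r lerD2l lerN2.
Qed.
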